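(* Let $X$ be a real Hilbert space and $Y$ a real Banach space. Let $F\colon X\to Y$ be a continuous function and let $L>0$, and suppose that for every $n\ge 1$, all $x_1,\ldots,x_n \in X$ and all $\lambda_1,\ldots,\lambda_n \ge 0$ with $\sum_{i=1}^n \lambda_i = 1$, $$\Big\| F\Big(\sum_{i=1}^n \lambda_i x_i\Big) - \sum_{i=1}^n \lambda_i F(x_i)\Big\| \le \frac{L}{2}\sum_{1\le i<j\le n} \lambda_i\lambda_j \|x_i - x_j\|^2.$$ For each $y^*\in Y^*$ define $\phi_{y^*}\colon X\to\mathbb{R}$ by $\phi_{y^*}(x) = y^*(F(x))$. Then for each $y^*\in Y^*$ with $\|y^*\|\le 1$, the function $\phi_{y^*}$ is Fréchet differentiable everywhere on $X$ and its gradient $\nabla\phi_{y^*}\colon X\to X$ is $L$-Lipschitz continuous.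
   Context: $Y^*$ denotes the (continuous) dual space of $Y$ with the dual norm. The gradient $\nabla\phi_{y^*}(x)\in X$ is the Riesz representative of the Fréchet derivative of $\phi_{y^*}$ at $x$. *)

From HB Require Import structures.
From mathcomp Require Import all_boot all_order all_algebra.
From mathcomp Require Import all_classical all_reals all_analysis.
Set Implicit Arguments. Unset Strict Implicit. Unset Printing Implicit Defensive.
Import Order.TTheory GRing.Theory Num.Theory.
Import numFieldNormedType.Exports.
Local Open Scope ring_scope.

(* [hilbert_inner ip] : ip is a (real) inner product on X inducing the norm
   of X.  A real Hilbert space is then a complete normed space
   (completeNormedModType) equipped with such an inner product. *)
Definition hilbert_inner (R : realType) (X : normedModType R)
  (ip : X -> X -> R) : Prop :=
  [/\ (forall x y, ip x y = ip y x),
      (forall a x y z, ip (a *: x + y) z = a * ip x z + ip y z)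
    & (forall x, ip x x = `|x| ^+ 2)].

Definition dual_elt (R : realType) (Y : normedModType R) (ys : Y -> R) : Prop :=
  (forall a u v, ys (a *: u + v) = a * ys u + ys v) /\ continuous ys.

Definition dual_norm_le1 (R : realType) (Y : normedModType R) (ys : Y -> R) : Prop :=
  forall y, `|ys y| <= `|y|.

(* For y* in the dual unit ball, f := y* o F inherits the two-point case of the
   hypothesis: |f (lam p + (1 - lam) q) - lam f p - (1 - lam) f q| is at most
   L/2 lam (1 - lam) |p - q|^2.  Applied at x and x + 2^-n h with lam = 1/2, it
   makes the dyadic difference quotients 2^n (f (x + 2^-n h) - f x) converge
   geometrically; their limit D is affine on segments, hence linear, satisfies
   |f (x + h) - f x - D h| <= L/2 |h|^2, and is bounded because f is continuous.
   The gradient at x is the Riesz representative of D, the minimiser of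
   |v|^2/2 - D v (minimising sequences are Cauchy by the parallelogram law).
   Finally, with d = x - y and G the difference of the gradients at x and y, four
   instances of the quadratic remainder bound combine so that the values of f
   cancel, giving <G, d - 2k> <= L (|k|^2 + |d - k|^2) for every k; the choice
   k = d/2 - G/(2L) yields |G| <= L |d|. *)

From HB Require Import structures.
From mathcomp Require Import all_boot all_order all_algebra.
From mathcomp Require Import all_classical all_reals all_analysis.
From mathcomp Require Import ring lra.
Import Order.TTheory GRing.Theory Num.Theory.
Import numFieldNormedType.Exports.
Local Open Scope ring_scope.
Set Implicit Arguments. Unset Strict Implicit. Unset Printing Implicit Defensive.

Section ScalarFunction.
Variables (R : pzRingType) (V : lmodType R) (l : V -> R).
Hypothesis l_scalar : scalar l.

Let lL : {scalar V} := HB.pack l (GRing.isLinear.Build _ _ _ _ l l_scalar).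

Lemma scalar_fun0 : l 0 = 0. Proof. exact: (linear0 lL). Qed.
Lemma scalar_funD : {morph l : u v / u + v}. Proof. exact: (linearD lL). Qed.
Lemma scalar_funN : {morph l : u / - u}. Proof. exact: (linearN lL). Qed.
Lemma scalar_funZ a v : l (a *: v) = a * l v. Proof. exact: (linearZ_LR lL). Qed.

End ScalarFunction.

Section SegmentAffine.
Variables (R : realFieldType) (V : lmodType R) (D : V -> R).
Hypothesis D0 : D 0 = 0.
Hypothesis D_affine : forall lam u w, 0 <= lam <= 1 ->
  D (lam *: u + (1 - lam) *: w) = lam * D u + (1 - lam) * D w.

Let D_shrink c u : 0 <= c <= 1 -> D (c *: u) = c * D u.
Proof. by move=> c01; have := D_affine u 0 c01; rewrite scaler0 addr0 D0 mulr0 addr0. Qed.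

Let half01 : 0 <= (2^-1 : R) <= 1. Proof. by apply/andP; split; lra. Qed.

Let D_half u w : D (2^-1 *: (u + w)) = 2^-1 * (D u + D w).
Proof.
have := D_affine u w half01; rewrite (_ : 1 - 2^-1 = 2^-1 :> R); last by field.
by rewrite -scalerDr -mulrDr.
Qed.

Let DN u : D (- u) = - D u.
Proof.
have := D_half u (- u); rewrite subrr scaler0 D0 => /esym/eqP.
rewrite mulf_eq0 invr_eq0 pnatr_eq0 /= addr_eq0.
by move=> /eqP ->; rewrite opprK.
Qed.

Let D_nonnegZ c u : 0 <= c -> D (c *: u) = c * D u.
Proof.
move=> c0; have [c1|c1] := lerP c 1; first by apply: D_shrink; rewrite c0.
have cN0 : c != 0 by rewrite gt_eqF // (lt_trans ltr01).
have c_inv01 : 0 <= c^-1 <= 1 by rewrite invr_ge0 c0 invf_le1 ?ltW // (lt_trans ltr01).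
have := D_shrink (c *: u) c_inv01; rewrite scalerA mulVf // scale1r => ->.
by rewrite mulrA mulfV // mul1r.
Qed.

Let DZ c u : D (c *: u) = c * D u.
Proof.
have [c0|c0] := lerP 0 c; first exact: D_nonnegZ.
by rewrite -[c]opprK scaleNr DN D_nonnegZ ?oppr_ge0 ?ltW // !mulNr opprK.
Qed.

Let DD u w : D (u + w) = D u + D w.
Proof.
have -> : u + w = 2 *: (2^-1 *: (u + w)) by rewrite scalerA mulfV ?scale1r.
by rewrite DZ D_half mulrA mulfV ?mul1r.
Qed.

Lemma segment_affine_scalar : scalar D.
Proof. by move=> a u w; rewrite DD DZ. Qed.

End SegmentAffine.

Lemma dist_telescope_le (R : numDomainType) (V : normedZmodType R)
    (u : nat -> V) (s : nat -> R) :
  (forall n, `|u n.+1 - u n| <= s n - s n.+1) ->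
  forall n k, (n <= k)%N -> `|u k - u n| <= s n - s k.
Proof.
move=> step n k /subnKC <-; elim: (k - n)%N => [|m IH].
  by rewrite addn0 !subrr normr0.
rewrite addnS; apply: le_trans (ler_distD (u (n + m)%N) _ _) _.
by rewrite [X in _ <= X](_ : _ = s (n + m)%N - s (n + m).+1 + (s n - s (n + m)%N));
  [exact: lerD | ring].
Qed.

Section VanishingRates.
Variable R : realType.
Local Open Scope classical_set_scope.

Lemma ler_cvg0 (r : nat -> R) (x : R) :
  r @ \oo --> 0 -> (forall n, x <= r n) -> x <= 0.
Proof.
move=> r0 xr; rewrite -(cvg_lim _ r0) //.
by apply: limr_ge; [exact: cvgP r0 | exact: nearW].
Qed.

Lemma dyadic_cvg0 (K : R) : K * (2^-1) ^+ n @[n --> \oo] --> 0.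
Proof.
rewrite -(mulr0 K); apply: cvgMr; apply: cvg_expr.
by rewrite ger0_norm ?invf_lt1 ?ltr1n.
Qed.

Lemma cauchy_rate_lim (V : completeNormedModType R) (v : nat -> V) (r : nat -> R) :
  r @ \oo --> 0 -> (forall n k, (n <= k)%N -> `|v n - v k| <= r n) ->
  exists u, forall n, `|v n - u| <= r n.
Proof.
move=> r0 v_rate.
have v_cvg : cvg (v @ \oo).
  apply/cauchy_cvgP/cauchy_exP => e e0.
  have [N _ rN] : \forall n \near \oo, `|0 - r n| < e by exact: cvgr_dist_lt.
  exists (v N); exists N => // k /= Nk.
  rewrite -ball_normE /=; apply: le_lt_trans (v_rate _ _ Nk) _.
  by have := rN N (leqnn N); rewrite sub0r normrN => /(le_lt_trans (ler_norm _)).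
exists (lim (v @ \oo)) => n; apply/ler_addgt0Pr => e e0.
have : \forall k \near \oo, `|lim (v @ \oo) - v k| <= e /\ (n <= k)%N.
  near=> k; split; last by near: k; exact: nbhs_infty_ge.
  by near: k; exact: cvgr_dist_le.
move=> /filter_ex [k [vk nk]].
by apply: le_trans (ler_distD (v k) _ _) _; rewrite lerD // ?v_rate // distrC.
Unshelve. all: by end_near. Qed.

End VanishingRates.

Lemma quad_ge0_eq0 (R : realFieldType) (a c : R) :
  (forall s, 0 <= s * c + s ^+ 2 * a) -> c = 0.
Proof.
move=> quad_ge0; set k := `|a| + 1.
have k0 : 0 < k by rewrite ltr_pwDr.
have := quad_ge0 (- c / k).
rewrite (_ : _ + _ = c ^+ 2 * (a - k) / k ^+ 2); last by field; rewrite gt_eqF.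
rewrite pmulr_lge0 ?invr_gt0 ?exprn_gt0 // => ge0.
have ak : a - k < 0 by have := ler_norm a; rewrite /k; lra.
by apply/eqP; rewrite -sqrf_eq0 eq_le sqr_ge0 andbT; nra.
Qed.

Section QuadraticRemainder.
Variables (R : realType) (V : normedModType R) (f l : V -> R) (x : V) (C : R).
Hypothesis l_scalar : scalar l.
Hypothesis remainder : forall h, `|f (x + h) - f x - l h| <= C * `|h| ^+ 2.

Lemma quadratic_remainder_bounded :
  {for x, continuous f} -> exists M, forall v, `|l v| <= M * `|v|.
Proof.
move=> /cvgr_dist_lt/(_ _ ltr01)/nbhs_normP[d /= d0 near_x].
set r := d / 2; have r0 : 0 < r by rewrite divr_gt0.
exists ((1 + C * r ^+ 2) / r) => v.
have [->|v0] := eqVneq v 0; first by rewrite (scalar_fun0 l_scalar) !normr0 mulr0.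
have nv : 0 < `|v| by rewrite normr_gt0.
have rv0 : 0 <= r / `|v| by rewrite divr_ge0 // ltW.
pose w := (r / `|v|) *: v.
have nw : `|w| = r by rewrite normrZ ger0_norm // divfK // gt_eqF.
have fw : `|f x - f (x + w)| < 1.
  by apply: near_x; rewrite /= opprD addrA subrr sub0r normrN nw ltr_pdivrMr // ltr_pMr // ltr1n.
have lw : `|l w| <= 1 + C * r ^+ 2.
  have := remainder w; rewrite nw distrC in fw |- *.
  have := ler_distD (f (x + w) - f x) 0 (l w); rewrite !sub0r !normrN.
  by move=> tri rem; lra.
have lv : r / `|v| * `|l v| <= 1 + C * r ^+ 2.
  by rewrite -[r / _]ger0_norm // -normrM -(scalar_funZ l_scalar).
rewrite mulrAC ler_pdivlMr //; have := ler_wpM2r (ltW nv) lv.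
by rewrite (_ : _ * `|v| = `|l v| * r) //; field; rewrite gt_eqF.
Qed.

Lemma quadratic_remainder_differentiable (M : R) :
  (forall v, `|l v| <= M * `|v|) -> differentiable f x /\ 'd f x =1 l.
Proof.
move=> l_bounded.
pose dl : {linear V -> R} := HB.pack l (GRing.isLinear.Build R V R *:%R l l_scalar).
have dl_cont : continuous dl.
  apply/bounded_linear_continuous/linear_boundedP; near=> m => v.
  by apply: le_trans (l_bounded v) _; rewrite ler_wpM2r //; near: m; exact: nbhs_pinfty_ge.
have dl_o : f \o shift x = cst (f x) + dl +o_ 0 id.
  apply/eqaddoP => e e0; near=> h.
  rewrite !fctE /shift /cst /= [h + x]addrC opprD addrA.
  apply: le_trans (remainder h) _; rewrite expr2 mulrA ler_wpM2r //.
  apply: (@le_trans _ _ ((`|C| + 1) * `|h|)).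
    by rewrite ler_wpM2r // (le_trans (ler_norm _)) ?lerDl.
  rewrite mulrC -ler_pdivlMr ?ltr_pwDr //.
  near: h; apply/nbhs_normP; exists (e / (`|C| + 1)); first by rewrite /= divr_gt0 ?ltr_pwDr.
  by move=> h /=; rewrite sub0r normrN => /ltW.
have d_eq := diff_unique dl_cont dl_o.
split; last by move=> h; rewrite d_eq.
by apply/diff_locallyP; rewrite d_eq.
Unshelve. all: by end_near. Qed.

End QuadraticRemainder.

Section InnerProduct.
Variables (R : realType) (X : normedModType R) (ip : X -> X -> R).
Hypothesis hip : hilbert_inner ip.

Lemma ip_sym x y : ip x y = ip y x. Proof. by case: hip. Qed.
Lemma ip_norm x : ip x x = `|x| ^+ 2. Proof. by case: hip. Qed.

Lemma ipr_scalar z : scalar (ip z).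
Proof. by case: hip => sym lin _ a x y; rewrite !(sym z) lin. Qed.

Lemma ipDr z : {morph ip z : x y / x + y}. Proof. exact: scalar_funD (ipr_scalar z). Qed.
Lemma ipNr z : {morph ip z : x / - x}. Proof. exact: scalar_funN (ipr_scalar z). Qed.
Lemma ipZr z a x : ip z (a *: x) = a * ip z x. Proof. exact: (scalar_funZ (ipr_scalar z)). Qed.
Lemma ipDl z x y : ip (x + y) z = ip x z + ip y z. Proof. by rewrite !(ip_sym _ z) ipDr. Qed.
Lemma ipNl z x : ip (- x) z = - ip x z. Proof. by rewrite !(ip_sym _ z) ipNr. Qed.
Lemma ipZl z a x : ip (a *: x) z = a * ip x z. Proof. by rewrite !(ip_sym _ z) ipZr. Qed.

Lemma normD_sqr x y : `|x + y| ^+ 2 = `|x| ^+ 2 + 2 * ip x y + `|y| ^+ 2.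
Proof. by rewrite -!ip_norm ipDl !ipDr (ip_sym y x); ring. Qed.

Lemma normB_sqr x y : `|x - y| ^+ 2 = `|x| ^+ 2 - 2 * ip x y + `|y| ^+ 2.
Proof. by rewrite normD_sqr ipNr normrN; ring. Qed.

Lemma parallelogram (x y : X) : `|x + y| ^+ 2 + `|x - y| ^+ 2 = 2 * `|x| ^+ 2 + 2 * `|y| ^+ 2.
Proof. by rewrite normD_sqr normB_sqr; ring. Qed.

Lemma cauchy_schwarz x y : `|ip x y| <= `|x| * `|y|.
Proof.
have [->|y0] := eqVneq y 0; first by rewrite -(scale0r 0) ipZr mul0r normr0 scale0r normr0 mulr0.
have ny : 0 < `|y| ^+ 2 by rewrite exprn_gt0 // normr_gt0.
have : 0 <= `|(`|y| ^+ 2) *: x - ip x y *: y| ^+ 2 by exact: sqr_ge0.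
rewrite normB_sqr !normrZ ipZl ipZr !exprMn !real_normK ?num_real //.
rewrite (_ : _ + _ = `|y| ^+ 2 * ((`|x| * `|y|) ^+ 2 - ip x y ^+ 2)); last by ring.
rewrite pmulr_rge0 // subr_ge0 -real_normK ?num_real // => ip2.
by rewrite -ler_sqr ?nnegrE ?mulr_ge0.
Qed.

End InnerProduct.

Section RieszRepresentation.
Variables (R : realType) (X : completeNormedModType R) (ip : X -> X -> R).
Variables (l : X -> R) (M : R).
Hypotheses (hip : hilbert_inner ip) (l_scalar : scalar l).
Hypothesis l_bounded : forall v, `|l v| <= M * `|v|.

Definition riesz_energy v := `|v| ^+ 2 / 2 - l v.

Lemma riesz_energy_has_inf : has_inf (range riesz_energy).
Proof.
split; first by exists (riesz_energy 0), 0.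
exists (- M ^+ 2 / 2) => _ [v _ <-]; have := l_bounded v.
by have := ler_norm (l v); have := sqr_ge0 (`|v| - M); rewrite /riesz_energy; nra.
Qed.

Lemma riesz_energy_midpoint a b : `|a - b| ^+ 2 =
  4 * (riesz_energy a + riesz_energy b - 2 * riesz_energy (2^-1 *: (a + b))).
Proof.
have := parallelogram hip a b.
rewrite /riesz_energy (scalar_funZ l_scalar) (scalar_funD l_scalar) normrZ exprMn.
rewrite ger0_norm ?invr_ge0 // => par.
rewrite (_ : `|a - b| ^+ 2 = 2 * `|a| ^+ 2 + 2 * `|b| ^+ 2 - `|a + b| ^+ 2); first by field.
by rewrite -par addrAC subrr add0r.
Qed.

Lemma riesz_energy_shift v s h : riesz_energy (v + s *: h) - riesz_energy v =
  s * (ip v h - l h) + s ^+ 2 * (`|h| ^+ 2 / 2).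
Proof.
rewrite /riesz_energy (normD_sqr hip) (scalar_funD l_scalar) (scalar_funZ l_scalar).
by rewrite (ipZr hip) normrZ exprMn real_normK ?num_real //; field.
Qed.

Lemma riesz_representation : exists u, ip u =1 l.
Proof.
set m := inf (range riesz_energy).
have m_le v : m <= riesz_energy v.
  by apply: (ge_inf riesz_energy_has_inf.2); exists v.
pose t n : R := (2^-1) ^+ n.
have t_gt0 n : 0 < t n by rewrite exprn_gt0 ?invr_gt0.
have t_le1 n : t n <= 1 by rewrite exprn_ile1 ?invr_ge0 ?invf_le1 ?ler1n.
have t_anti n k : (n <= k)%N -> t k <= t n.
  by apply: ler_wiXn2l; rewrite ?invr_ge0 ?invf_le1 ?ler1n.
have near_inf n : exists w, riesz_energy w < m + t n ^+ 2.
  have [_ [w _ <-]] := inf_adherent (exprn_gt0 2 (t_gt0 n)) riesz_energy_has_inf.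
  by exists w.
have [v v_min] := boolp.choice near_inf.
have v_cauchy n k : (n <= k)%N -> `|v n - v k| <= 3 * t n.
  move=> nk; have := riesz_energy_midpoint (v n) (v k).
  have := m_le (2^-1 *: (v n + v k)); have := v_min n; have := v_min k.
  have := t_anti _ _ nk; have := t_gt0 k => tk0 tkn vk vn mid dist.
  by rewrite -ler_sqr ?nnegrE ?mulr_ge0 ?(ltW (t_gt0 n)) // dist; nra.
have [u v_u] := cauchy_rate_lim (dyadic_cvg0 3) v_cauchy.
exists u => h; apply/eqP; rewrite -subr_eq0; apply/eqP.
apply: (@quad_ge0_eq0 _ (`|h| ^+ 2 / 2)) => s.
rewrite -oppr_le0; apply: ler_cvg0 (dyadic_cvg0 (1 + 3 * `|s| * `|h|)) _ => n.
have ip_near : `|s * (ip (v n) h - ip u h)| <= `|s| * (3 * t n * `|h|).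
  rewrite normrM ler_wpM2l // -(ipNl hip) -(ipDl hip).
  by apply: le_trans (cauchy_schwarz hip _ _) _; rewrite ler_wpM2r.
move: ip_near; rewrite ler_norml => /andP[ip_lo ip_hi].
have := riesz_energy_shift (v n) s h; have := m_le (v n + s *: h).
have := v_min n; have := t_le1 n; have := t_gt0 n.
have := normr_ge0 s; have := normr_ge0 h.
by rewrite -/(t n); nra.
Qed.

End RieszRepresentation.

Definition two_point_defect_le (R : realType) (X : normedModType R) (L : R) (f : X -> R) :=
  forall (p q : X) (lam : R), 0 <= lam <= 1 ->
    `|f (lam *: p + (1 - lam) *: q) - (lam * f p + (1 - lam) * f q)|
      <= L / 2 * (lam * (1 - lam) * `|p - q| ^+ 2).

Lemma convex_combination_shift (R : comPzRingType) (V : lmodType R) (x u w : V) (lam t : R) :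
  lam *: (x + t *: u) + (1 - lam) *: (x + t *: w) = x + t *: (lam *: u + (1 - lam) *: w).
Proof.
rewrite !scalerDr !scalerA [lam * t]mulrC [(1 - lam) * t]mulrC -!scalerA.
by rewrite addrACA -scalerDl subrKC scale1r.
Qed.

Section TwoPointDefect.
Variables (R : realType) (X : normedModType R) (L : R) (f : X -> R) (x : X).
Hypotheses (L0 : 0 <= L) (f_defect : two_point_defect_le L f).

Let t n : R := (2^-1) ^+ n.

Let t_gt0 n : 0 < t n. Proof. by rewrite exprn_gt0 ?invr_gt0. Qed.

Definition dyadic_quotient n h := (f (x + t n *: h) - f x) / t n.

Lemma dyadic_quotient_step n h :
  `|dyadic_quotient n.+1 h - dyadic_quotient n h| <= L / 2 * `|h| ^+ 2 * (t n - t n.+1).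
Proof.
have tS : t n.+1 = t n / 2 by rewrite /t exprSr.
have half01 : 0 <= (2^-1 : R) <= 1 by apply/andP; split; lra.
have := f_defect x (x + t n *: h) half01.
have -> : 2^-1 *: x + (1 - 2^-1) *: (x + t n *: h) = x + t n.+1 *: h.
  rewrite -{1}[x]addr0 -(scaler0 _ (t n)) convex_combination_shift scaler0 add0r scalerA tS.
  by congr (_ + _ *: _); field.
rewrite [- (x + _)]opprD addNKr normrN normrZ gtr0_norm // => mid.
rewrite /dyadic_quotient tS.
rewrite (_ : _ - _ = (f (x + t n / 2 *: h) - (2^-1 * f x + (1 - 2^-1) * f (x + t n *: h)))
                       * (2 / t n)); last by field; rewrite gt_eqF.
rewrite normrM (gtr0_norm (divr_gt0 _ (t_gt0 n))) //.
rewrite (_ : _ * (t n - _) = L / 2 * (2^-1 * (1 - 2^-1) * (t n * `|h|) ^+ 2) * (2 / t n)).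
  by rewrite ler_wpM2r ?divr_ge0 ?(ltW (t_gt0 n)) // -tS.
by field; rewrite gt_eqF.
Qed.

Lemma dyadic_quotient_lim :
  exists D, forall h n, `|dyadic_quotient n h - D h| <= L / 2 * `|h| ^+ 2 * t n.
Proof.
have lim_h h : exists d, forall n,
    `|dyadic_quotient n h - d| <= L / 2 * `|h| ^+ 2 * t n.
  set c := L / 2 * `|h| ^+ 2.
  have c0 : 0 <= c by rewrite mulr_ge0 ?divr_ge0.
  have step m : `|dyadic_quotient m.+1 h - dyadic_quotient m h| <= c * t m - c * t m.+1.
    by rewrite -mulrBr; exact: dyadic_quotient_step.
  apply: cauchy_rate_lim (dyadic_cvg0 c) _ => n k nk.
  rewrite distrC; apply: le_trans (dist_telescope_le step nk) _.
  by rewrite gerBl mulr_ge0 // ltW.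
by have [D D_lim] := boolp.choice lim_h; exists D.
Qed.

Section DyadicLimit.
Variable D : X -> R.
Hypothesis D_lim : forall h n, `|dyadic_quotient n h - D h| <= L / 2 * `|h| ^+ 2 * t n.

Lemma dyadic_lim_remainder h : `|f (x + h) - f x - D h| <= L / 2 * `|h| ^+ 2.
Proof. by have := D_lim h 0; rewrite /dyadic_quotient /t expr0 scale1r !divr1 mulr1. Qed.

Let D0 : D 0 = 0.
Proof.
have := D_lim 0 0; rewrite normr0 expr0n /= mulr0 mul0r normr_le0.
by rewrite /dyadic_quotient scaler0 addr0 subrr mul0r sub0r oppr_eq0 => /eqP.
Qed.

Let dyadic_quotient_gap n lam u w : 0 <= lam <= 1 ->
  `|dyadic_quotient n (lam *: u + (1 - lam) *: w)
     - (lam * dyadic_quotient n u + (1 - lam) * dyadic_quotient n w)|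
    <= L / 2 * `|u - w| ^+ 2 * t n.
Proof.
move=> lam01; have := f_defect (x + t n *: u) (x + t n *: w) lam01.
rewrite convex_combination_shift [- (x + _)]opprD addrACA subrr add0r -scalerBr.
rewrite normrZ gtr0_norm // /dyadic_quotient => gap.
rewrite (_ : _ - _ = (f (x + t n *: (lam *: u + (1 - lam) *: w))
    - (lam * f (x + t n *: u) + (1 - lam) * f (x + t n *: w))) / t n); last first.
  by field; rewrite gt_eqF.
rewrite normrM normfV (gtr0_norm (t_gt0 n)) ler_pdivrMr //; apply: le_trans gap _.
have lam_gap : lam * (1 - lam) <= 1 by case/andP: lam01; nra.
rewrite -!mulrA ler_wpM2l ?divr_ge0 // exprMn.
by have := sqr_ge0 (t n); have := sqr_ge0 `|u - w|; nra.
Qed.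

Let D_affine lam u w : 0 <= lam <= 1 ->
  D (lam *: u + (1 - lam) *: w) = lam * D u + (1 - lam) * D w.
Proof.
move=> lam01; apply/eqP; rewrite -subr_eq0 -normr_le0.
set c := lam *: u + (1 - lam) *: w.
set K := L / 2 * (`|c| ^+ 2 + `|u| ^+ 2 + `|w| ^+ 2 + `|u - w| ^+ 2).
apply: ler_cvg0 (dyadic_cvg0 K) _ => n.
have [lam0 lam1] : 0 <= lam /\ 0 <= 1 - lam by case/andP: lam01; split; lra.
have err_u : `|lam * (dyadic_quotient n u - D u)| <= L / 2 * `|u| ^+ 2 * t n.
  rewrite normrM ger0_norm //; apply: le_trans (D_lim u n).
  by rewrite ler_piMl //; case/andP: lam01.
have err_w : `|(1 - lam) * (dyadic_quotient n w - D w)| <= L / 2 * `|w| ^+ 2 * t n.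
  rewrite normrM ger0_norm //; apply: le_trans (D_lim w n).
  by rewrite ler_piMl // gerBl; case/andP: lam01.
have err_c := D_lim c n; rewrite distrC in err_c.
have gap := dyadic_quotient_gap n u w lam01.
rewrite (_ : D c - _ = D c - dyadic_quotient n c
    + lam * (dyadic_quotient n u - D u) + (1 - lam) * (dyadic_quotient n w - D w)
    + (dyadic_quotient n c
       - (lam * dyadic_quotient n u + (1 - lam) * dyadic_quotient n w))); last by ring.
rewrite (_ : K * t n = L / 2 * `|c| ^+ 2 * t n + L / 2 * `|u| ^+ 2 * t n
    + L / 2 * `|w| ^+ 2 * t n + L / 2 * `|u - w| ^+ 2 * t n); last by rewrite /K; ring.
by do 3!apply: le_trans (ler_normD _ _) (lerD _ _) => //.
Qed.

Lemma dyadic_lim_scalar : scalar D.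
Proof. exact: segment_affine_scalar D0 D_affine. Qed.

End DyadicLimit.

Lemma two_point_defect_quadratic_approx :
  exists D, scalar D /\ forall h, `|f (x + h) - f x - D h| <= L / 2 * `|h| ^+ 2.
Proof.
have [D D_lim] := dyadic_quotient_lim.
by exists D; split; [exact: dyadic_lim_scalar | exact: dyadic_lim_remainder].
Qed.

End TwoPointDefect.

Lemma quadratic_remainder_grad_lipschitz (R : realType) (X : normedModType R)
    (ip : X -> X -> R) (f : X -> R) (g : X -> X) (L : R) :
  hilbert_inner ip -> 0 < L ->
  (forall x h, `|f (x + h) - f x - ip (g x) h| <= L / 2 * `|h| ^+ 2) ->
  forall x y, `|g x - g y| <= L * `|x - y|.
Proof.
move=> hip L0 rem x y; set d := x - y; set G := g x - g y.
pose q z h := f (z + h) - f z - ip (g z) h.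
have gap k : ip G (d - 2 *: k) = q y (d - k) - q x (- k) + q x (k - d) - q y k.
  rewrite /q.
  have -> : y + (d - k) = x + - k by rewrite /d addrA [y + _]addrC subrK.
  have -> : x + (k - d) = y + k by rewrite /d opprB addrCA [x + _]addrC subrK addrC.
  rewrite /G /d (ipDl hip) (ipNl hip) !(ipDr hip, ipNr hip, ipZr hip).
  lra.
have q_le z h : - (L / 2 * `|h| ^+ 2) <= q z h <= L / 2 * `|h| ^+ 2.
  by rewrite -ler_norml; exact: rem.
have gap_le k : ip G (d - 2 *: k) <= L * (`|k| ^+ 2 + `|d - k| ^+ 2).
  rewrite gap; have := q_le y (d - k); have := q_le x (- k).
  have := q_le x (k - d); have := q_le y k.
  by rewrite normrN (distrC k d); lra.
pose a := 2^-1 *: d; pose b := (2 * L)^-1 *: G.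
have L_neq0 : L != 0 by rewrite gt_eqF.
have dE : d = a + a by rewrite /a -scalerDl (_ : 2^-1 + 2^-1 = 1 :> R) ?scale1r //; field.
have := gap_le (a - b).
have -> : d - 2 *: (a - b) = L^-1 *: G.
  rewrite scalerBr /a scalerA (_ : 2 * 2^-1 = 1 :> R) ?scale1r; last by field.
  by rewrite opprB addrC subrK /b scalerA; congr (_ *: _); field.
rewrite {1}dE opprB addrCA addrK [b + a]addrC [_ + `|a + b| ^+ 2]addrC (parallelogram hip).
rewrite (ipZr hip) (ip_norm hip) !normrZ !ger0_norm ?invr_ge0 ?mulr_ge0 ?(ltW L0) //.
rewrite (_ : L * _ = L * `|d| ^+ 2 / 2 + L^-1 * `|G| ^+ 2 / 2); last by field.
move=> ineq; have : L^-1 * `|G| ^+ 2 <= L * `|d| ^+ 2 by lra.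
rewrite ler_pdivrMl // mulrA -expr2 -exprMn => sqr_le.
by rewrite -ler_sqr ?nnegrE ?mulr_ge0 ?(ltW L0).
Qed.

Lemma two_point_defect_gradient (R : realType) (X : completeNormedModType R)
    (ip : X -> X -> R) (f : X -> R) (L : R) :
  hilbert_inner ip -> 0 <= L -> continuous f -> two_point_defect_le L f ->
  exists g : X -> X, forall x h, `|f (x + h) - f x - ip (g x) h| <= L / 2 * `|h| ^+ 2.
Proof.
move=> hip L0 f_cont f_defect.
suff grad_x x : exists u, forall h, `|f (x + h) - f x - ip u h| <= L / 2 * `|h| ^+ 2.
  by have [g g_rem] := boolp.choice grad_x; exists g.
have [D [D_scalar D_rem]] := two_point_defect_quadratic_approx x L0 f_defect.
have [M D_bounded] := quadratic_remainder_bounded D_scalar D_rem (f_cont x).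
have [u uD] := riesz_representation hip D_scalar D_bounded.
by exists u => h; rewrite uD.
Qed.

Definition jensen_defect_le (R : realType) (X Y : normedModType R) (L : R) (F : X -> Y) :=
  forall (n : nat) (x : 'I_n.+1 -> X) (lam : 'I_n.+1 -> R),
    (forall i, 0 <= lam i) -> \sum_i lam i = 1 ->
    `|F (\sum_i lam i *: x i) - \sum_i lam i *: F (x i)|
      <= L / 2 * \sum_(i < n.+1) \sum_(j < n.+1 | (i < j)%N)
                   lam i * lam j * `|x i - x j| ^+ 2.

Lemma jensen_defect_two_point (R : realType) (X Y : normedModType R) (L : R) (F : X -> Y)
    (p q : X) (lam : R) :
  jensen_defect_le L F -> 0 <= lam <= 1 ->
  `|F (lam *: p + (1 - lam) *: q) - (lam *: F p + (1 - lam) *: F q)|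
    <= L / 2 * (lam * (1 - lam) * `|p - q| ^+ 2).
Proof.
move=> F_defect /andP[lam0 lam1].
pose x (i : 'I_2) := if i == ord0 then p else q.
pose mu (i : 'I_2) := if i == ord0 then lam else 1 - lam.
have mu_ge0 i : 0 <= mu i by rewrite /mu; case: ifP; lra.
have mu_sum : \sum_i mu i = 1 by rewrite big_ord_recl big_ord1 /mu /=; lra.
have := F_defect 1%N x mu mu_ge0 mu_sum.
rewrite !big_ord_recl !big_ord0 !addr0 /x /mu /=.
by do 2!rewrite !big_mkcond !big_ord_recl !big_ord0 /=; rewrite !add0r !addr0.
Qed.

Lemma dual_comp_two_point_defect (R : realType) (X Y : normedModType R) (L : R)
    (F : X -> Y) (ys : Y -> R) :
  jensen_defect_le L F -> dual_elt ys -> dual_norm_le1 ys -> two_point_defect_le L (ys \o F).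
Proof.
move=> F_defect [ys_scalar _] ys_le1 p q lam lam01.
apply: le_trans (jensen_defect_two_point p q F_defect lam01).
set c := lam *: p + (1 - lam) *: q.
rewrite (_ : _ - _ = ys (F c - (lam *: F p + (1 - lam) *: F q))) //.
by rewrite !(scalar_funD ys_scalar, scalar_funN ys_scalar, scalar_funZ ys_scalar).
Qed.

Unset Implicit Arguments.
Theorem lemma2p2 (R : realType) (X Y : completeNormedModType R)
  (ip : X -> X -> R) (hip : hilbert_inner ip)
  (F : X -> Y) (hF : continuous F) (L : R) (hL : 0 < L)
  (hconv : forall (n : nat) (x : 'I_n.+1 -> X) (lam : 'I_n.+1 -> R),
      (forall i, 0 <= lam i) -> \sum_i lam i = 1 ->
      `|F (\sum_i lam i *: x i) - \sum_i lam i *: F (x i)|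
        <= L / 2 * \sum_(i < n.+1) \sum_(j < n.+1 | (i < j)%N)
                     lam i * lam j * `|x i - x j| ^+ 2) :
  forall ys : Y -> R, dual_elt ys -> dual_norm_le1 ys ->
    exists grad : X -> X,
      (forall x, differentiable (ys \o F) x /\
                 forall h, 'd (ys \o F) x h = ip (grad x) h) /\
      (forall x1 x2, `|grad x1 - grad x2| <= L * `|x1 - x2|).
Proof.
move=> ys ys_dual ys_le1.
have f_cont : continuous (ys \o F).
  by move=> x; apply: continuous_comp; [exact: hF | exact: ys_dual.2].
have f_defect := dual_comp_two_point_defect hconv ys_dual ys_le1.
have [grad grad_rem] := two_point_defect_gradient hip (ltW hL) f_cont f_defect.
exists grad; split; last exact: quadratic_remainder_grad_lipschitz hip hL grad_rem.
move=> x; apply: (quadratic_remainder_differentiable (ipr_scalar hip (grad x)) (grad_rem x)).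
exact: cauchy_schwarz hip (grad x).
Qed.
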